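(* Let $t$ be a positive integer and let $G$ be a minimal counterexample to the following conjecture: every graph on $4t-1$ vertices with independence number $2$ satisfies $\mathrm{cm}(G)\ge t$. That is, $G$ has $4t-1$ vertices, $\alpha(G)=2$ and $\mathrm{cm}(G)\le t-1$, and the conjecture holds for every positive integer $t'<t$. Then $G$ contains no dominating matching.
   Context: All graphs are finite and simple. $\alpha(G)$ is the independence number. A matching $M$ in $G$ is connected if for every two edges of $M$ there is an edge of $G$ joining an endpoint of one to an endpoint of the other; $\mathrm{cm}(G)$ is the maximum size of a connected matching in $G$. A connected matching $M$ of $G$ is dominating if every edge of $M$ is adjacent to every vertex of $V(G)\setminus V(M)$, i.e. every vertex outside $V(M)$ is adjacent to at least one endpoint of each edge of $M$. *)

From mathcomp Require Import all_boot.
Set Implicit Arguments. Unset Strict Implicit. Unset Printing Implicit Defensive.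

Definition simple_graph (T : finType) (e : rel T) : Prop :=
  symmetric e /\ irreflexive e.

Definition independent (T : finType) (e : rel T) (S : {set T}) : bool :=
  [forall x in S, forall y in S, ~~ e x y].

Definition alpha (T : finType) (e : rel T) : nat :=
  \max_(S : {set T} | independent e S) #|S|.

Definition ends (T : finType) (p : T * T) : {set T} := [set p.1; p.2].

Definition matching (T : finType) (e : rel T) (M : {set T * T}) : bool :=
  [forall p in M, e p.1 p.2] &&
  [forall p in M, forall q in M, (p != q) ==> [disjoint ends p & ends q]].

Definition connected_matching (T : finType) (e : rel T) (M : {set T * T}) : bool :=
  matching e M &&
  [forall p in M, forall q in M,
     (p != q) ==> [exists x in ends p, exists y in ends q, e x y]].

Definition cm (T : finType) (e : rel T) : nat :=
  \max_(M : {set T * T} | connected_matching e M) #|M|.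

Definition matched_vertices (T : finType) (M : {set T * T}) : {set T} :=
  \bigcup_(p in M) ends p.

Definition dominating_matching (T : finType) (e : rel T) (M : {set T * T}) : bool :=
  connected_matching e M &&
  [forall v in ~: matched_vertices M, forall p in M, e v p.1 || e v p.2].

From mathcomp Require Import all_boot zify.
Set Implicit Arguments. Unset Strict Implicit. Unset Printing Implicit Defensive.

(* If M is a nonempty dominating connected matching with m edges, then
   m <= cm(G) <= t - 1 and at least 4(t - m) - 1 vertices lie outside V(M).
   Any 4(t - m) - 1 of them induce a graph with independence number at most 2,
   which has a connected matching N of t - m edges: by minimality of t if its
   independence number is 2, and because it is complete otherwise. As M
   dominates every vertex outside V(M), M together with N is a connected
   matching of t edges, contradicting cm(G) <= t - 1. *)

Section Matchings.
Variables (T : finType) (e : rel T).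
Implicit Types (M N : {set T * T}) (p q : T * T).

Lemma in_ends1 p : p.1 \in ends p.
Proof. by rewrite !inE eqxx. Qed.

Definition ends_adjacent p q : bool :=
  [exists x in ends p, exists y in ends q, e x y].

Lemma ends_adjacentC p q : symmetric e -> ends_adjacent p q = ends_adjacent q p.
Proof.
move=> e_sym; wlog suff: p q / ends_adjacent p q -> ends_adjacent q p.
  by move=> sw; apply/idP/idP; apply: sw.
case/exists_inP => x xp /exists_inP[y yq exy].
by apply/exists_inP; exists y => //; apply/exists_inP; exists x; rewrite // e_sym.
Qed.

Lemma matchingP M :
  reflect ({in M, forall p, e p.1 p.2} /\
           {in M &, forall p q, p != q -> [disjoint ends p & ends q]})
          (matching e M).
Proof.
apply: (iffP andP) => [[/forall_inP edgeM /forall_inP disjM] | [edgeM disjM]].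
  by split=> // p q pM qM; apply/implyP; apply: (forall_inP (disjM p pM)).
split; apply/forall_inP => // p pM.
by apply/forall_inP => q qM; apply/implyP; apply: disjM.
Qed.

Lemma connected_matchingP M :
  reflect (matching e M /\
           {in M &, forall p q, p != q -> ends_adjacent p q})
          (connected_matching e M).
Proof.
apply: (iffP andP) => [[matchM /forall_inP connM] | [matchM connM]].
  by split=> // p q pM qM; apply/implyP; apply: (forall_inP (connM p pM)).
split=> //; apply/forall_inP => p pM.
by apply/forall_inP => q qM; apply/implyP; apply: connM.
Qed.

Lemma connected_matching0 : connected_matching e set0.
Proof.
by apply/connected_matchingP; split; [apply/matchingP; split|] => p; rewrite inE.
Qed.

Lemma leq_cm M : connected_matching e M -> #|M| <= cm e.
Proof. exact: leq_bigmax_cond. Qed.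

Lemma cm_witness : exists2 M, connected_matching e M & #|M| = cm e.
Proof.
have cm0 := connected_matching0.
exists [arg max_(M > set0 | connected_matching e M) #|M|]; first by case: arg_maxnP.
by rewrite /cm (bigmax_eq_arg set0).
Qed.

Lemma ends_sub_matched M p : p \in M -> ends p \subset matched_vertices M.
Proof. exact: bigcup_sup. Qed.

Lemma matched_vertices1 M p : p \in M -> p.1 \in matched_vertices M.
Proof. by move=> pM; apply: (subsetP (ends_sub_matched pM)); apply: in_ends1. Qed.

Lemma card_matched_vertices M : #|matched_vertices M| <= 2 * #|M|.
Proof.
rewrite mulnC -sum_nat_const /matched_vertices.
apply: (big_ind2 (fun (A : {set T}) n => #|A| <= n)) => [|A m B n lenA lenB|p _].
- by rewrite cards0.
- exact: leq_trans (leq_card_setU A B) (leq_add lenA lenB).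
- by rewrite cards2; case: (_ != _).
Qed.

Lemma card_setU_matched M N :
  [disjoint matched_vertices M & matched_vertices N] -> #|M :|: N| = #|M| + #|N|.
Proof.
move=> disjMN; apply/eqP; rewrite (leq_card_setU M N).2.
rewrite -setI_eq0; apply/eqP/setP => p; rewrite !inE; apply/negbTE/andP => -[pM pN].
by have := disjointFr disjMN (matched_vertices1 pM); rewrite matched_vertices1.
Qed.

Lemma connected_matching_setU M N :
  symmetric e -> dominating_matching e M -> connected_matching e N ->
  [disjoint matched_vertices M & matched_vertices N] ->
  connected_matching e (M :|: N).
Proof.
move=> e_sym /andP[/connected_matchingP[/matchingP[edgeM disjM] connM]].
move=> /forall_inP domM /connected_matchingP[/matchingP[edgeN disjN] connN] disjMN.
have disj_ends p q : p \in M -> q \in N -> [disjoint ends p & ends q].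
  by move=> pM qN; apply: disjointW disjMN; apply: ends_sub_matched.
have adj_ends p q : p \in M -> q \in N -> ends_adjacent p q.
  move=> pM qN; have q1M : q.1 \in ~: matched_vertices M.
    by rewrite inE (disjointFl disjMN (matched_vertices1 qN)).
  have /orP[] := forall_inP (domM q.1 q1M) p pM => adj; apply/exists_inP;
    [exists p.1 | exists p.2]; rewrite ?inE ?eqxx ?orbT //;
    by apply/exists_inP; exists q.1; rewrite ?inE ?eqxx // e_sym.
apply/connected_matchingP; split; first (apply/matchingP; split).
- by move=> p; rewrite inE => /orP[/edgeM | /edgeN].
- move=> p q; rewrite !inE => /orP[pM | pN] /orP[qM | qN] pq.
  + exact: disjM.
  + exact: disj_ends.
  + by rewrite disjoint_sym disj_ends.
  + exact: disjN.
- move=> p q; rewrite !inE => /orP[pM | pN] /orP[qM | qN] pq.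
  + exact: connM.
  + exact: adj_ends.
  + by rewrite -/(ends_adjacent p q) ends_adjacentC // adj_ends.
  + exact: connN.
Qed.

End Matchings.

Section Maps.
Variables (T T' : finType) (e : rel T) (e' : rel T') (g : T' -> T).
Hypothesis g_inj : injective g.

Definition map_edges (M : {set T' * T'}) : {set T * T} :=
  [set (g p.1, g p.2) | p in M].

Lemma ends_map p : ends (g p.1, g p.2) = g @: ends p.
Proof. by rewrite /ends imsetU1 imset_set1. Qed.

Lemma card_map_edges M : #|map_edges M| = #|M|.
Proof. by apply: card_imset => -[a b] [c d] /= [/g_inj-> /g_inj->]. Qed.

Lemma matched_vertices_map M :
  matched_vertices (map_edges M) \subset g @: matched_vertices M.
Proof.
apply/subsetP => x /bigcupP[_ /imsetP[p pM ->]]; rewrite ends_map.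
by apply/subsetP; rewrite imsetS // ends_sub_matched.
Qed.

Lemma connected_matching_map M :
  {homo g : x y / e' x y >-> e x y} ->
  connected_matching e' M -> connected_matching e (map_edges M).
Proof.
move=> g_hom /connected_matchingP[/matchingP[edgeM disjM] connM].
have neq p q : (g p.1, g p.2) != (g q.1, g q.2) -> p != q by apply: contraNneq => ->.
apply/connected_matchingP; split; first (apply/matchingP; split).
- by move=> _ /imsetP[p pM ->]; apply: g_hom; apply: edgeM.
- move=> _ _ /imsetP[p pM ->] /imsetP[q qM ->] /neq pq.
  by rewrite !ends_map imset_disjoint // disjM.
- move=> _ _ /imsetP[p pM ->] /imsetP[q qM ->] /neq pq.
  have /exists_inP[x xp /exists_inP[y yq exy]] := connM p q pM qM pq.
  apply/exists_inP; exists (g x); rewrite ?ends_map ?imset_f //.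
  by apply/exists_inP; exists (g y); rewrite ?imset_f // g_hom.
Qed.

Lemma alpha_map :
  (forall x y, e (g x) (g y) -> e' x y) -> alpha e' <= alpha e.
Proof.
move=> g_refl; apply/bigmax_leqP => S indS.
rewrite -(card_imset S g_inj); apply: leq_bigmax_cond.
apply/forall_inP => _ /imsetP[x xS ->]; apply/forall_inP => _ /imsetP[y yS ->].
exact: contra (g_refl x y) (forall_inP (forall_inP indS x xS) y yS).
Qed.

End Maps.

Section Complete.
Variable T : finType.

Lemma complete_matching (W : {set T}) k : 2 * k <= #|W| ->
  exists2 M, matching [rel x y : T | x != y] M &
             #|M| = k /\ matched_vertices M \subset W.
Proof.
elim: k W => [|k IH] W le2k_W.
  exists set0; first by apply/matchingP; split=> p; rewrite inE.
  by rewrite cards0 /matched_vertices big_set0 sub0set.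
have /card_gt1P[x [y [xW yW xy]]] : 1 < #|W| by lia.
have yWx : y \in W :\ x by rewrite !inE eq_sym xy.
have le2k_Wxy : 2 * k <= #|W :\ x :\ y|.
  by move: le2k_W; rewrite (cardsD1 x) (cardsD1 y (W :\ x)) xW yWx; lia.
have [M0 /matchingP[edgeM0 disjM0] [cardM0 subM0]] := IH _ le2k_Wxy.
have disj_xy : [disjoint [set x; y] & matched_vertices M0].
  rewrite disjoint_sym disjoints_subset; apply: subset_trans subM0 _.
  by apply/subsetP => z; rewrite !inE negb_or => /and3P[-> -> _].
have disj_q q : q \in M0 -> [disjoint ends (x, y) & ends q].
  by move=> qM0; apply: disjointWr disj_xy; apply: ends_sub_matched.
have xyM0 : (x, y) \notin M0.
  apply: contraL disj_xy => xyM0; apply/negP => /disjointFr/(_ (in_ends1 (x, y))).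
  by rewrite (matched_vertices1 xyM0).
exists ((x, y) |: M0); [apply/matchingP; split | split].
- by move=> p; rewrite in_setU1 => /orP[/eqP-> // | /edgeM0].
- move=> p q; rewrite !in_setU1 => /orP[/eqP-> | pM0] /orP[/eqP-> | qM0].
  + by rewrite eqxx.
  + by move=> _; apply: disj_q.
  + by move=> _; rewrite disjoint_sym disj_q.
  + exact: disjM0.
- by rewrite cardsU1 xyM0 cardM0.
- apply/subsetP => z /bigcupP[p]; rewrite in_setU1 => /orP[/eqP-> | pM0] zp.
    by move: zp; rewrite !inE => /orP[]/eqP->.
  have /(subsetP subM0) := subsetP (ends_sub_matched pM0) z zp.
  by rewrite !inE => /and3P[].
Qed.

Lemma complete_connected_matching (e : rel T) M :
  (forall x y, x != y -> e x y) -> matching [rel x y : T | x != y] M ->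
  connected_matching e M.
Proof.
move=> e_complete /matchingP[edgeM disjM]; apply/connected_matchingP; split.
  by apply/matchingP; split=> [p /edgeM /e_complete | //].
move=> p q pM qM /(disjM p q pM qM) disj_pq.
apply/exists_inP; exists p.1; first exact: in_ends1.
apply/exists_inP; exists q.1; first exact: in_ends1.
apply: e_complete; apply: contraTneq disj_pq => p1q1.
by apply/negP => /disjointFr/(_ (in_ends1 p)); rewrite p1q1 in_ends1.
Qed.

Lemma complete_leq_cm (e : rel T) k :
  (forall x y, x != y -> e x y) -> 2 * k <= #|T| -> k <= cm e.
Proof.
move=> e_complete; rewrite -cardsT => /complete_matching[M matchM [<- _]].
exact/leq_cm/complete_connected_matching.
Qed.

End Complete.

Lemma alpha_le1_complete (T : finType) (e : rel T) :
  simple_graph e -> alpha e <= 1 -> forall x y, x != y -> e x y.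
Proof.
move=> [e_sym e_irr] alpha_le1 x y xy; apply: contraTT alpha_le1 => exy.
rewrite -ltnNge; apply: leq_trans (leq_bigmax_cond [set x; y] _).
  by rewrite cards2 xy.
apply/forall_inP => u; rewrite !inE => /orP[]/eqP->;
  apply/forall_inP => v; rewrite !inE => /orP[]/eqP->;
  by rewrite ?e_irr // e_sym.
Qed.

Section Induced.
Variables (T : finType) (e : rel T) (W : {set T}).

Definition induced : rel {x : T | x \in W} := fun x y => e (val x) (val y).

Lemma simple_graph_induced : simple_graph e -> simple_graph induced.
Proof. by case=> e_sym e_irr; split=> [x y | x]; [apply: e_sym | apply: e_irr]. Qed.

Lemma card_induced : #|{: {x : T | x \in W}}| = #|W|.
Proof. by rewrite card_sig; apply: eq_card. Qed.

Lemma alpha_induced : alpha induced <= alpha e.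
Proof. exact: alpha_map val_inj _. Qed.

Lemma cm_induced :
  exists2 M, connected_matching e M & #|M| = cm induced /\ matched_vertices M \subset W.
Proof.
have [M cmM <-] := cm_witness induced.
exists (map_edges val M); first exact: (connected_matching_map (e' := induced) val_inj).
split; first exact: card_map_edges val_inj M.
apply: subset_trans (matched_vertices_map val M) _.
by apply/subsetP => _ /imsetP[x _ ->]; apply: valP.
Qed.

End Induced.

Definition cm_conjecture (t : nat) : Prop :=
  forall (T : finType) (e : rel T),
    simple_graph e -> #|T| = 4 * t - 1 -> alpha e = 2 -> t <= cm e.

Lemma cm_conjecture_alpha_le2 (t : nat) (T : finType) (e : rel T) :
  0 < t -> cm_conjecture t ->
  simple_graph e -> #|T| = 4 * t - 1 -> alpha e <= 2 -> t <= cm e.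
Proof.
move=> t_gt0 conj_t simple_e card_T; rewrite leq_eqVlt ltnS => /orP[/eqP|].
  exact: conj_t.
move=> /(alpha_le1_complete simple_e) complete_e.
by apply: complete_leq_cm complete_e _; rewrite card_T; lia.
Qed.

Lemma exists_subset_card (T : finType) (A : {set T}) n :
  n <= #|A| -> exists2 B : {set T}, B \subset A & #|B| = n.
Proof.
case/card_geqP => s [uniq_s <- subA]; exists [set x in s].
  by apply/subsetP => x; rewrite inE => /subA.
by rewrite cardsE; apply/card_uniqP.
Qed.

Theorem lemma2p7 (t : nat) (T : finType) (e : rel T) :
  0 < t ->
  simple_graph e ->
  #|T| = 4 * t - 1 ->
  alpha e = 2 ->
  cm e <= t - 1 ->
  (forall t' : nat, 0 < t' -> t' < t ->
     forall (T' : finType) (e' : rel T'),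
       simple_graph e' -> #|T'| = 4 * t' - 1 -> alpha e' = 2 -> t' <= cm e') ->
  ~ (exists M : {set T * T}, (M != set0) && dominating_matching e M).
Proof.
move=> _ simple_e card_T alpha2 cm_le minimal [M /andP[M_n0 domM]].
have cmM : connected_matching e M by case/andP: domM.
have m_gt0 : 0 < #|M| by rewrite card_gt0.
have m_le : #|M| <= t - 1 := leq_trans (leq_cm cmM) cm_le.
have s_gt0 : 0 < t - #|M| by lia.
have s_lt : t - #|M| < t by lia.
have : 4 * (t - #|M|) - 1 <= #|~: matched_vertices M|.
  by move: (cardsC (matched_vertices M)) (card_matched_vertices M); rewrite card_T; lia.
case/exists_subset_card => W subW card_W.
have [N cmN [card_N subN]] := cm_induced e W.
have le_N : t - #|M| <= #|N|.
  rewrite card_N; apply: (cm_conjecture_alpha_le2 s_gt0 (minimal _ s_gt0 s_lt)).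
  - exact: simple_graph_induced.
  - by rewrite card_induced.
  - by rewrite -alpha2 alpha_induced.
have disjMN : [disjoint matched_vertices M & matched_vertices N].
  by rewrite disjoint_sym disjoints_subset (subset_trans subN subW).
have := leq_cm (connected_matching_setU simple_e.1 domM cmN disjMN).
by rewrite card_setU_matched //; lia.
Qed.
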